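(* Let $A\in\mathbb{R}^{m\times n}$ and let $N\subseteq[n]$ be such that the submatrix $A_{[n]\setminus N}$ has full column rank. Then for every $z\in\ker(A)$, $\|z\|_\infty\le\kappa_A\|z_N\|_1$.
   Context: $A_S$ denotes the submatrix of $A$ formed by the columns in $S$, and $z_N$ the restriction of $z$ to coordinates in $N$. An elementary vector of $\ker(A)$ is a nonzero $g\in\ker(A)$ with inclusion-minimal support among nonzero vectors of $\ker(A)$. The circuit imbalance is $\kappa_A=\max\{|g_i|/|g_j|: g \text{ elementary},\ i,j\in\mathrm{supp}(g)\}$. *)

From HB Require Import structures.
From mathcomp Require Import all_boot all_order all_algebra.
From mathcomp Require Import boolp classical_sets reals.
Set Implicit Arguments. Unset Strict Implicit. Unset Printing Implicit Defensive.
Import Order.TTheory GRing.Theory Num.Theory.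
Local Open Scope ring_scope.

(* vectors of R^n are column vectors 'cV[R]_n; z i 0 is the i-th coordinate *)

Definition in_ker (R : fieldType) m n (A : 'M[R]_(m, n)) (z : 'cV[R]_n) : Prop :=
  A *m z = 0.

Definition supp (R : fieldType) n (z : 'cV[R]_n) : {set 'I_n} :=
  [set i | z i 0 != 0].

Definition elementary (R : fieldType) m n (A : 'M[R]_(m, n)) (g : 'cV[R]_n) : Prop :=
  [/\ g != 0, in_ker A g &
      forall h : 'cV[R]_n, h != 0 -> in_ker A h ->
        supp h \subset supp g -> supp h = supp g].

(* circuit imbalance kappa_A = max of |g_i|/|g_j| over elementary g and
   i, j in supp g (the max is a sup of a finite set; if ker A = 0 the set is
   empty and the value is the sup of the empty set, namely 0) *)
Definition kappa (R : realType) m n (A : 'M[R]_(m, n)) : R :=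
  sup [set r : R | exists g : 'cV[R]_n, exists i j : 'I_n,
        [/\ elementary A g, i \in supp g, j \in supp g &
            r = `|g i 0| / `|g j 0|]].

Definition colsubset (R : Type) m n (A : 'M[R]_(m, n)) (S : {set 'I_n})
  : 'M[R]_(m, #|S|) :=
  colsub (fun j : 'I_#|S| => enum_val j) A.

Definition norm_inf (R : numDomainType) n (z : 'cV[R]_n) : R :=
  \big[Num.max/0]_(i < n) `|z i 0|.

Definition norm1_on (R : numDomainType) n (z : 'cV[R]_n) (N : {set 'I_n}) : R :=
  \sum_(i in N) `|z i 0|.

(** A kernel vector that is not elementary splits conformally into two kernel
vectors of strictly smaller support: moving from z along a smaller-support
kernel vector until a coordinate of z vanishes never flips a sign.  Iterating,
|z_i| is a sum of the |g_i| over a conformal family of elementary vectors g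
whose N-parts add up to z_N in l1-norm.  Full column rank of A_{[n]\N} forces
every elementary g to have some j in N in its support, whence
|g_i| <= kappa_A |g_j| <= kappa_A ||g_N||_1; summing gives the claim. *)

From HB Require Import structures.
From mathcomp Require Import all_boot all_order all_algebra.
From mathcomp Require Import boolp classical_sets reals.
Import Order.TTheory GRing.Theory Num.Theory.
Local Open Scope ring_scope.

Set Implicit Arguments.
Unset Strict Implicit.
Unset Printing Implicit Defensive.

Section Support.
Variables (R : fieldType) (n : nat).
Implicit Types (a : R) (h z : 'cV[R]_n).

Lemma supp_nonempty h : h != 0 -> exists j, j \in supp h.
Proof.
move=> h_neq0; apply/set0Pn; apply: contraNneq h_neq0 => supp0.
apply/eqP/matrixP => j k; rewrite (ord1 k) !mxE.
by apply/eqP; have /setP/(_ j) := supp0; rewrite !inE => /negbFE.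
Qed.

Lemma supp_subset_eq0 h z j :
  supp h \subset supp z -> z j 0 = 0 -> h j 0 = 0.
Proof.
move=> /fintype.subsetP/(_ j) hz zj0; move: hz; rewrite !inE zj0 eqxx.
by case: eqP => // _ /(_ isT).
Qed.

Lemma suppZ a h : a != 0 -> supp (a *: h) = supp h.
Proof. by move=> a0; apply/setP => j; rewrite !inE mxE mulf_eq0 negb_or a0. Qed.

Lemma suppN h : supp (- h) = supp h.
Proof. by apply/setP => j; rewrite !inE mxE oppr_eq0. Qed.

Lemma suppBZ_subset a h z :
  supp h \subset supp z -> supp (z - a *: h) \subset supp z.
Proof.
move=> hz; apply/fintype.subsetP => j; rewrite !inE !mxE.
apply: contraNN => /eqP zj0.
by rewrite zj0 (supp_subset_eq0 hz zj0) mulr0 subr0.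
Qed.

End Support.

Section Kernel.
Variables (R : fieldType) (m n : nat) (A : 'M[R]_(m, n)).
Implicit Types (a : R) (g h z : 'cV[R]_n).

Lemma in_kerB z h : in_ker A z -> in_ker A h -> in_ker A (z - h).
Proof. by rewrite /in_ker mulmxBr => -> ->; rewrite subr0. Qed.

Lemma in_kerZ a h : in_ker A h -> in_ker A (a *: h).
Proof. by rewrite /in_ker -scalemxAr => ->; rewrite scaler0. Qed.

Lemma in_kerN h : in_ker A h -> in_ker A (- h).
Proof. by rewrite /in_ker mulmxN => ->; rewrite oppr0. Qed.

Lemma elementary_proportional g g' :
  elementary A g -> elementary A g' -> supp g' = supp g ->
  exists2 c, c != 0 & g' = c *: g.
Proof.
move=> [g_neq0 g_ker g_min] [g'_neq0 g'_ker _] supp_g'.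
have [k] := supp_nonempty g_neq0; rewrite inE => gk.
pose c := g' k 0 / g k 0; pose h := g' - c *: g.
have hk : h k 0 = 0 by rewrite !mxE divfK // subrr.
have h_eq0 : h = 0.
  apply: contra_eq (gk) => h_neq0.
  have hg : supp h \subset supp g by rewrite -supp_g' suppBZ_subset ?supp_g'.
  have /setP/(_ k) := g_min h h_neq0 (in_kerB g'_ker (in_kerZ c g_ker)) hg.
  by rewrite !inE hk eqxx => <-.
have g'E : g' = c *: g by apply/eqP; rewrite -subr_eq0 -/h h_eq0.
exists c => //; apply: contraNneq g'_neq0 => c0.
by rewrite g'E c0 scale0r.
Qed.

Lemma colsubset_mul_restrict (S : {set 'I_n}) z :
  (forall j, j \notin S -> z j 0 = 0) ->
  colsubset A S *m \col_(k < #|S|) z (enum_val k) 0 = A *m z.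
Proof.
move=> zS; apply/matrixP => i k; rewrite !mxE (bigID (mem S)) /=.
rewrite [X in _ = _ + X]big1 ?addr0 => [|j /zS]; last first.
  by rewrite (ord1 k) => ->; rewrite mulr0.
by rewrite [RHS]big_enum_val; apply: eq_bigr => j _; rewrite !mxE (ord1 k).
Qed.

Lemma in_ker_supp_meets (N : {set 'I_n}) z :
  \rank (colsubset A (~: N)) = #|~: N| -> in_ker A z -> z != 0 ->
  exists2 j, j \in N & j \in supp z.
Proof.
move=> rk z_ker /eqP z_neq0; apply: contrapT => no_j; apply: z_neq0.
have zN j : j \in N -> z j 0 = 0.
  move=> jN; apply/eqP; apply: contra_notT no_j => zj.
  by exists j; rewrite ?inE.
pose y := \col_(k < #|~: N|) z (enum_val k) 0.
have y0 : y = 0.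
  have free : row_free (colsubset A (~: N))^T by rewrite /row_free mxrank_tr rk.
  apply: trmx_inj; apply: (row_free_inj free); rewrite trmx0 mul0mx -trmx_mul.
  rewrite colsubset_mul_restrict ?z_ker ?trmx0 // => j.
  by rewrite inE negbK => /zN.
apply/matrixP => j k; rewrite (ord1 k) !mxE.
have [/zN //|jN] := boolP (j \in N).
have jC : j \in ~: N by rewrite inE.
by move/matrixP/(_ (enum_rank_in jC j) 0): y0; rewrite !mxE enum_rankK_in.
Qed.

End Kernel.

Section Conformal.
Variables (R : realFieldType) (n : nat).
Implicit Types (a b c : R) (h z : 'cV[R]_n).

Definition conformal (u z : 'cV[R]_n) := forall j, 0 <= u j 0 * z j 0.

Lemma normrD_conformal a b c :
  c != 0 -> 0 <= a * c -> 0 <= b * c -> `|a + b| = `|a| + `|b|.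
Proof.
move=> c_neq0 ac bc.
have [c_gt0|c_lt0|c0] := ltgtP 0 c; last by rewrite -c0 eqxx in c_neq0.
- rewrite !(pmulr_lge0 _ c_gt0) in ac bc.
  by rewrite !ger0_norm ?addr_ge0.
- rewrite !(nmulr_lge0 _ c_lt0) in ac bc.
  by rewrite !ler0_norm ?opprD // -(addr0 0) lerD.
Qed.

(* The step size t = z_k / h_k for k maximising h_k / z_k is the largest one
   for which z - t h stays conformal to z; it kills the coordinate k. *)
Lemma conformal_reduce z h k0 :
  supp h \subset supp z -> 0 < h k0 0 * z k0 0 ->
  exists2 t, 0 < t &
    conformal (z - t *: h) z /\ supp (z - t *: h) \proper supp z.
Proof.
move=> hz hz_k0.
have ratioE j : h j 0 * z j 0 = h j 0 / z j 0 * z j 0 ^+ 2.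
  have [->|zj] := eqVneq (z j 0) 0; first by rewrite expr2 !mulr0.
  by rewrite expr2 mulrA divfK.
have zk0 : z k0 0 != 0 by apply: contraTneq hz_k0 => ->; rewrite mulr0 ltxx.
have sqr_zk0 : 0 < z k0 0 ^+ 2 by rewrite exprn_even_gt0 ?zk0 ?orbT.
have ratio_k0 : 0 < h k0 0 / z k0 0 by rewrite -(pmulr_lgt0 _ sqr_zk0) -ratioE.
case: (@arg_maxP _ _ _ k0 xpredT (fun j => h j 0 / z j 0)) => // k _ k_max.
have r_gt0 : 0 < h k 0 / z k 0 := lt_le_trans ratio_k0 (k_max k0 isT).
have hk : h k 0 != 0 by apply: contraTneq r_gt0 => ->; rewrite mul0r ltxx.
have zk : z k 0 != 0 by apply: contraTneq r_gt0 => ->; rewrite invr0 mulr0 ltxx.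
exists (z k 0 / h k 0); first by rewrite -invf_div invr_gt0.
split.
  move=> j; rewrite !mxE mulrBl -mulrA ratioE mulrA -expr2.
  rewrite -[X in X - _]mul1r -mulrBl mulr_ge0 ?sqr_ge0 // subr_ge0 -invf_div.
  by rewrite ler_pdivrMl // mulr1; apply: k_max.
apply/fintype.properP; split; first exact: suppBZ_subset.
by exists k; rewrite !inE ?zk // !mxE divfK // subrr eqxx.
Qed.

End Conformal.

Section ConformalSplit.
Variables (R : realFieldType) (m n : nat) (A : 'M[R]_(m, n)).
Implicit Types (h w z : 'cV[R]_n).

Lemma not_elementary_conformal z :
  in_ker A z -> ~ elementary A z -> z != 0 ->
  exists w, [/\ w != 0, in_ker A w, conformal w z & supp w \proper supp z].
Proof.
move=> z_ker not_el z_neq0.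
have [h [h_neq0 h_ker hz h_ne]] : exists h,
    [/\ h != 0, in_ker A h, supp h \subset supp z & supp h != supp z].
  apply: contra_notP not_el => no_h; split => // h h_neq0 h_ker hz.
  by apply/eqP; apply: contra_notT no_h => h_ne; exists h.
have [k1 k1z k1h] : exists2 k1, k1 \in supp z & k1 \notin supp h.
  by apply/fintype.subsetPn; rewrite finset.eqEsubset hz /= in h_ne.
have [j0 hj0] := supp_nonempty h_neq0.
have zj0 : z j0 0 != 0 by move/fintype.subsetP: hz => /(_ j0 hj0); rewrite inE.
rewrite inE in hj0.
wlog hz_j0 : h h_ker hz k1h {h_neq0 h_ne hj0} / 0 < h j0 0 * z j0 0.
  move=> gen; have := mulf_neq0 hj0 zj0.
  rewrite neq_lt => /orP[neg|]; last exact: gen.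
  apply: (gen (- h)); rewrite ?suppN //; first exact: in_kerN.
  by rewrite mxE mulNr oppr_gt0.
have [t _ [w_conf w_proper]] := conformal_reduce hz hz_j0.
exists (z - t *: h); split => //; last exact: in_kerB (in_kerZ t h_ker).
apply: contraTneq k1z => w0; move/matrixP/(_ k1 0): w0; rewrite inE in k1h.
by rewrite !mxE (eqP (negbNE k1h)) mulr0 subr0 inE => ->; rewrite eqxx.
Qed.

Lemma not_elementary_split z :
  in_ker A z -> ~ elementary A z -> z != 0 ->
  exists w u, [/\ in_ker A w, in_ker A u, supp w \proper supp z,
    supp u \proper supp z & forall j, `|z j 0| = `|w j 0| + `|u j 0|].
Proof.
move=> z_ker not_el z_neq0.
have [w [w_neq0 w_ker w_conf w_proper]] :=
  not_elementary_conformal z_ker not_el z_neq0.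
have wz := proper_sub w_proper.
have [k0 wk0] := supp_nonempty w_neq0.
have zk0 : z k0 0 != 0 by move/fintype.subsetP: wz => /(_ k0 wk0); rewrite inE.
rewrite inE in wk0.
have wz_k0 : 0 < w k0 0 * z k0 0 by rewrite lt_def (mulf_neq0 wk0 zk0) w_conf.
have [t t_gt0 [v_conf v_proper]] := conformal_reduce wz wz_k0.
exists (z - t *: w), (t *: w); split => //.
- exact: in_kerB (in_kerZ t w_ker).
- exact: in_kerZ.
- by rewrite suppZ ?gt_eqF.
move=> j; have [zj0|zj0] := eqVneq (z j 0) 0.
  by rewrite !mxE zj0 (supp_subset_eq0 wz zj0) mulr0 subr0 normr0 addr0.
have zE : z j 0 = (z - t *: w) j 0 + (t *: w) j 0 by rewrite !mxE subrK.
rewrite {1}zE (normrD_conformal zj0 (v_conf j)) // mxE -mulrA.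
exact: mulr_ge0 (ltW t_gt0) (w_conf j).
Qed.

End ConformalSplit.

Section CircuitImbalance.
Variables (R : realType) (m n : nat) (A : 'M[R]_(m, n)).
Implicit Types (g z : 'cV[R]_n).

Definition circuit_ratios : set R :=
  [set r | exists g : 'cV[R]_n, exists i j : 'I_n,
     [/\ elementary A g, i \in supp g, j \in supp g &
         r = `|g i 0| / `|g j 0|]].

Lemma kappaE : kappa A = sup circuit_ratios.
Proof. by []. Qed.

(* Elementary vectors with a common support are proportional, so one
   representative per support realises all circuit ratios. *)
Lemma circuit_ratios_ubound : has_ubound circuit_ratios.
Proof.
pose rep S := xget 0 [set g | elementary A g /\ supp g = S].
pose ratio p := `|rep p.1.1 p.1.2 0| / `|rep p.1.1 p.2 0|.
exists (\big[Num.max/0]_(p : {set 'I_n} * 'I_n * 'I_n) ratio p).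
move=> _ [g [i [j [g_el _ _ ->]]]].
have [rep_el supp_rep] :
    [set g' | elementary A g' /\ supp g' = supp g]%classic (rep (supp g)).
  by apply: xgetPex; exists g.
have [c c_neq0 repE] := elementary_proportional g_el rep_el supp_rep.
apply: le_trans (le_bigmax _ ratio (supp g, i, j)); rewrite /ratio /= repE !mxE.
by rewrite !normrM invfM mulrACA mulfV ?normr_eq0 // mul1r.
Qed.

Lemma circuit_ratio_le_kappa g i j :
  elementary A g -> i \in supp g -> j \in supp g ->
  `|g i 0| / `|g j 0| <= kappa A.
Proof.
move=> g_el gi gj; have r_in : circuit_ratios (`|g i 0| / `|g j 0|).
  by exists g, i, j.
rewrite kappaE; apply: (sup_upper_bound _ r_in).
by split; [exists (`|g i 0| / `|g j 0|) | exact: circuit_ratios_ubound].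
Qed.

Lemma kappa_ge0 : 0 <= kappa A.
Proof.
have [[_ [g [i [j [g_el gi gj _]]]]]|no_ratio] :=
  pselect (exists r, circuit_ratios r).
  exact: le_trans (divr_ge0 _ _) (circuit_ratio_le_kappa g_el gi gj).
rewrite kappaE (_ : circuit_ratios = set0) ?sup0 //.
by apply/seteqP; split => // r r_ratio; apply: no_ratio; exists r.
Qed.

Variable N : {set 'I_n}.
Hypothesis rankN : \rank (colsubset A (~: N)) = #|~: N|.

Lemma elementary_le_kappa_norm1 g i :
  elementary A g -> `|g i 0| <= kappa A * norm1_on g N.
Proof.
move=> g_el; have [g_neq0 g_ker _] := g_el.
have [j jN gj] := in_ker_supp_meets rankN g_ker g_neq0.
have [gi0|gi] := eqVneq (g i 0) 0.
  by rewrite gi0 normr0 mulr_ge0 ?kappa_ge0 ?sumr_ge0.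
have gj_le : `|g j 0| <= norm1_on g N.
  by rewrite /norm1_on (bigD1 j) //= lerDl sumr_ge0.
have gj0 : `|g j 0| != 0 by move: gj; rewrite inE normr_eq0.
have gi_in : i \in supp g by rewrite inE.
rewrite -[`|g i 0|](divfK gj0).
have := circuit_ratio_le_kappa g_el gi_in gj.
move/(ler_wpM2r (normr_ge0 (g j 0)))/le_trans; apply.
by rewrite ler_wpM2l ?kappa_ge0.
Qed.

Lemma in_ker_le_kappa_norm1 z i :
  in_ker A z -> `|z i 0| <= kappa A * norm1_on z N.
Proof.
have [k] := ubnP #|supp z|; elim: k z i => // k IH z i supp_z z_ker.
have [->|z_neq0] := eqVneq z 0.
  by rewrite mxE normr0 mulr_ge0 ?kappa_ge0 ?sumr_ge0.
have [z_el|not_el] := pselect (elementary A z).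
  exact: elementary_le_kappa_norm1.
have [w [u [w_ker u_ker w_proper u_proper zE]]] :=
  not_elementary_split z_ker not_el z_neq0.
have smaller v : supp v \proper supp z -> (#|supp v| < k)%N.
  by move=> /proper_card lt_vz; exact: leq_trans lt_vz supp_z.
rewrite zE /norm1_on (eq_bigr _ (fun j _ => zE j)) big_split mulrDr /=.
by rewrite lerD // IH // smaller.
Qed.

End CircuitImbalance.

Theorem lemma2p6 (R : realType) (m n : nat) (A : 'M[R]_(m, n)) (N : {set 'I_n}) :
  \rank (colsubset A (~: N)) = #|~: N| ->
  forall z : 'cV[R]_n, in_ker A z ->
    norm_inf z <= kappa A * norm1_on z N.
Proof.
move=> rankN z z_ker; apply: bigmax_le => [|i _].
  by rewrite mulr_ge0 ?kappa_ge0 ?sumr_ge0.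
exact: in_ker_le_kappa_norm1.
Qed.
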